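(* Let $h=8/15$, $a=3/15$, and for $p,q,r\in(0,1/36)$ let $K_{pqr}$ be the attractor of $\mathcal S_{pqr}=\{S_1,\dots,S_6\}$ with $S_1(x)=px$, $S_2(x)=a+rx$, $S_3(x)=h-qx$, $S_4(x)=h-r+rx$, $S_5(x)=1-a-rx$, $S_6(x)=1-r+rx$. Say $\mathcal S_{pqr}$ has unique one-point intersection if $S_3(K_{pqr})\cap S_4(K_{pqr})=\{h\}$. Then for each $r\in(0,1/36)$, the set of $(p,q)\in(0,r)^2$ for which $\mathcal S_{pqr}$ has unique one-point intersection has full Lebesgue measure in $(0,r)^2$, and for each $p\in(0,r)$ the set of $q\in(0,r)$ for which $\mathcal S_{pqr}$ has unique one-point intersection has full Lebesgue measure in $(0,r)$.
   Context: By construction, all pieces $S_i(K_{pqr})$, $i=1,\dots,6$, are pairwise disjoint except possibly $S_3(K_{pqr})$ and $S_4(K_{pqr})$, whose intersection always contains $h$. *)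

From HB Require Import structures.
From mathcomp Require Import all_boot all_order all_algebra.
From mathcomp Require Import all_classical all_reals all_analysis.
Set Implicit Arguments. Unset Strict Implicit. Unset Printing Implicit Defensive.
Import Order.TTheory GRing.Theory Num.Theory.
Import numFieldNormedType.Exports.
Local Open Scope classical_set_scope.
Local Open Scope ring_scope.

Section Defs.
Variable R : realType.

Definition hh : R := 8 / 15.
Definition aa : R := 3 / 15.

(* The six maps S_1, ..., S_6 of S_pqr, indexed by i : 'I_6 (i = 0..5 <-> S_1..S_6). *)
Definition Smap (p q r : R) (i : 'I_6) (x : R) : R :=
  match val i with
  | 0 => p * x
  | 1 => aa + r * x
  | 2 => hh - q * x
  | 3 => hh - r + r * x
  | 4 => 1 - aa - r * x
  | _ => 1 - r + r * x
  end.

(* K is the attractor of S_pqr: the nonempty compact set with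
   K = S_1(K) u ... u S_6(K) (unique by Hutchinson's theorem). *)
Definition is_attractor (p q r : R) (K : set R) : Prop :=
  compact K /\ K !=set0 /\ K = \bigcup_(i in [set: 'I_6]) (Smap p q r i @` K).

Definition unique_one_point (p q r : R) : Prop :=
  forall K, is_attractor p q r K ->
    (Smap p q r (inord 2) @` K) `&` (Smap p q r (inord 3) @` K) = [set hh].
End Defs.

(* If S_3(K) and S_4(K) share a point other than h, it is h - q y = h - r (1 - z) with
   y, z in K, so q y = r w with y, w = 1 - z > 0.  Near 0 the set K is p K and near 1 it is
   1 - r (1 - K), so zooming by powers of p and r moves y and w above a = 3/15 and turns the
   relation into c q y = w with c = p^i / r^(j+1).  Approximating y and 1 - w by points
   Y_s(q), Y_t(q) of K indexed by words s, t of length n (36^n pairs) gives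
   |c q Y_s(q) - (1 - Y_t(q))| <= 6 r^n.  As q |-> Y(q) is 2-Lipschitz while
   c (Y_s - 2 q) >= 3, this defect grows at rate at least 1 in q (transversality), so for
   fixed p, i, j, s, t the admissible q lie in a set of diameter 12 r^n.  The exceptional q
   for given p therefore have measure at most 24 (36 r)^n for all n, i.e. zero because
   36 r < 1, and the planar statement follows by integrating these sections. *)

From HB Require Import structures.
From mathcomp Require Import all_boot all_order all_algebra.
From mathcomp Require Import all_classical all_reals all_analysis.
From mathcomp Require Import measurable_realfun.
From mathcomp Require Import ring lra.
Import Order.TTheory GRing.Theory Num.Theory.
Import numFieldNormedType.Exports.
Local Open Scope classical_set_scope.
Local Open Scope ring_scope.
Set Implicit Arguments. Unset Strict Implicit.

Lemma exists_expr_mul_lt (R : realType) (x c e : R) : 0 <= x < 1 -> 0 < e ->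
  exists N, x ^+ N * c < e.
Proof.
move=> /andP[x0 x1] e0.
have x_lt1 : `|x| < 1 by rewrite ger0_norm.
have xc0 : (fun n => x ^+ n * c) @ \oo --> 0.
  by rewrite -(mul0r c); apply: cvgM; [exact: cvg_expr | exact: cvg_cst].
have [N _ HN] := cvgr_lt _ xc0 _ e0.
by exists N; apply: HN => /=.
Qed.

Lemma closed_approx (R : realType) (A : set R) (c : R) : closed A ->
  (forall e, 0 < e -> exists2 y, A y & `|c - y| < e) -> A c.
Proof.
move=> Acl Aapprox; apply: Acl => B /nbhs_ballP[e e0 eB].
have [y Ay cy] := Aapprox e e0; exists y; split => //; apply: eB.
by rewrite -ball_normE.
Qed.

Lemma exists_rescale_ge (R : realType) (P : R -> Prop) (rho b : R) : 0 < rho < 1 ->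
  (forall u, P u -> u <= 1) -> (forall u, P u -> 0 < u < b -> P (u / rho)) ->
  forall u, P u -> 0 < u -> exists i, P (u / rho ^+ i) /\ b <= u / rho ^+ i.
Proof.
move=> /andP[rho0 rho1] P_le1 P_div u Pu u0.
have rho01 : 0 <= rho < 1 by rewrite ltW.
have [N] := exists_expr_mul_lt 1 rho01 u0.
rewrite mulr1; elim: N u u0 Pu => [|N IH] u u0 Pu uN.
  by move: uN; rewrite expr0 => /lt_le_trans/(_ (P_le1 u Pu)); rewrite ltxx.
have [bu|ub] := leP b u; first by exists 0%N; rewrite expr0 divr1.
have Pu' : P (u / rho) by apply: P_div => //; rewrite u0 ub.
have uN' : rho ^+ N < u / rho by rewrite ltr_pdivlMr // mulrC -exprS.
have [i [Pi bi]] := IH _ (divr_gt0 u0 rho0) Pu' uN'.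
by exists i.+1; rewrite exprS invfM mulrA.
Qed.

(* Splits into the six maps, plus a vacuous seventh case (i >= 6) on which Smap acts as S_6. *)
Ltac case_Smap i := case: i => -[|[|[|[|[|[|?]]]]]] ?; rewrite /Smap /hh /aa /=.

Section Maps.
Variables (R : realType) (r : R).
Hypothesis hr : 0 < r < 1/36.

Lemma Smap_lipschitz p q i x y : 0 <= p <= r -> 0 <= q <= r ->
  `|Smap p q r i x - Smap p q r i y| <= r * `|x - y|.
Proof.
move=> /andP[p0 pr] /andP[q0 qr].
have xy := ler_norm (x - y); have yx : y - x <= `|x - y| by rewrite distrC ler_norm.
rewrite ler_norml; case_Smap i; apply/andP; split; nra.
Qed.

Lemma Smap_ge0_le1 p q i x : 0 <= p <= r -> 0 <= q <= r -> 0 <= x <= 1 ->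
  0 <= Smap p q r i x <= 1.
Proof.
move=> /andP[p0 pr] /andP[q0 qr] /andP[x0 x1]; have /andP[_ r_lt] := hr.
have r0 : 0 <= r := le_trans p0 pr.
have px : p * x <= p by apply: ler_piMr.
have qx : q * x <= q by apply: ler_piMr.
have rx : r * x <= r by apply: ler_piMr.
have := mulr_ge0 p0 x0; have := mulr_ge0 q0 x0; have := mulr_ge0 r0 x0.
case_Smap i => *; apply/andP; split; lra.
Qed.

Lemma Smap_near01 p q i x D : 0 <= p <= r -> 0 <= q <= r -> 0 <= D ->
  - D <= x <= 1 + D -> - (r * D) <= Smap p q r i x <= 1 + r * D.
Proof.
move=> /andP[p0 pr] /andP[q0 qr] D0 /andP[Dx xD]; have /andP[_ r_lt] := hr.
case_Smap i; apply/andP; split; nra.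
Qed.

Lemma Smap_lipschitz_q p q1 q2 i x1 x2 : 0 <= p <= r -> 0 <= q1 <= r -> 0 <= q2 <= r ->
  `|x2| <= 1 ->
  `|Smap p q2 r i x2 - Smap p q1 r i x1| <= `|q2 - q1| + r * `|x2 - x1|.
Proof.
move=> /andP[p0 pr] /andP[q10 q1r] /andP[q20 q2r] x2_le1.
have x21 := ler_norm (x2 - x1); have x12 : x1 - x2 <= `|x2 - x1| by rewrite distrC ler_norm.
have q21 := ler_norm (q2 - q1); have q12 : q1 - q2 <= `|q2 - q1| by rewrite distrC ler_norm.
have := ler_norm x2; have : - x2 <= `|x2| by rewrite -normrN ler_norm.
rewrite ler_norml; case_Smap i => *; apply/andP; split; nra.
Qed.

Definition word_point p q (s : seq 'I_6) : R := foldr (Smap p q r) 0 s.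

Lemma word_point_ge0_le1 p q s : 0 <= p <= r -> 0 <= q <= r ->
  0 <= word_point p q s <= 1.
Proof.
move=> hp hq; elim: s => [|i s IH] /=; first by rewrite lexx ler01.
exact: Smap_ge0_le1.
Qed.

Lemma word_point_lipschitz_q p q1 q2 s : 0 <= p <= r -> 0 <= q1 <= r -> 0 <= q2 <= r ->
  `|word_point p q2 s - word_point p q1 s| <= 2 * `|q2 - q1|.
Proof.
move=> hp hq1 hq2; elim: s => [|i s IH] /=; first by rewrite subrr normr0 mulr_ge0.
have /andP[y0 y1] := word_point_ge0_le1 s hp hq2.
apply: le_trans (Smap_lipschitz_q i _ hp hq1 hq2 _) _; first by rewrite ger0_norm.
have := normr_ge0 (q2 - q1); case/andP: hr; nra.
Qed.

(* Level-n trace of the relation c q y = w between zoomed points y, 1 - w of K. *)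
Definition approx_coincidence (c p q : R) (n : nat) (s t : seq 'I_6) : Prop :=
  aa R - r ^+ n <= word_point p q s /\ aa R - r ^+ n <= 1 - word_point p q t /\
  `|c * q * word_point p q s - (1 - word_point p q t)| <= 6 * r ^+ n.

End Maps.

Section Attractor.
Variables (R : realType) (p q r : R) (K : set R).
Hypotheses (hp : 0 <= p <= r) (hq : 0 <= q <= r) (hr : 0 < r < 1/36).
Hypothesis K_attractor : is_attractor p q r K.

Let r01 : 0 <= r < 1. Proof. by case/andP: hr => r0 r1; rewrite ltW //=; lra. Qed.

Lemma attractor_image i y : K y -> K (Smap p q r i y).
Proof. by case: K_attractor => _ [_ Keq] Ky; rewrite Keq; exists i => //; exists y. Qed.

Lemma attractor_preimage y : K y -> exists i y', K y' /\ y = Smap p q r i y'.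
Proof.
case: K_attractor => _ [_ Keq]; rewrite {1}Keq => -[i _ [y' Ky' <-]].
by exists i, y'.
Qed.

Lemma attractor_ge0_le1 y : K y -> 0 <= y <= 1.
Proof.
have [M KM] : exists M : R, forall z, K z -> `|z| <= M.
  have [Kc _] := K_attractor; have [M [_ HM]] := compact_bounded Kc.
  by exists (M + 1) => z Kz; apply: (HM (M + 1)) => //; rewrite ltrDl.
have K_near01 n : forall y, K y -> - (r ^+ n * `|M|) <= y <= 1 + r ^+ n * `|M|.
  elim: n => [|n IH] {}y Ky.
    have := KM y Ky; have := ler_norm M; rewrite expr0 mul1r ler_norml.
    by move=> MM /andP[yM My]; apply/andP; split; lra.
  have [i [y' [Ky' ->]]] := attractor_preimage Ky.
  rewrite exprS -mulrA; apply: Smap_near01 => //; last exact: IH.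
  by rewrite mulr_ge0 // exprn_ge0 //; case/andP: r01.
move=> Ky; apply/andP; split; apply/ler_addgt0Pr => e e0;
  have [N NM] := exists_expr_mul_lt `|M| r01 e0;
  have /andP[yN Ny] := K_near01 N y Ky; lra.
Qed.

Lemma attractor0 : K 0.
Proof.
have [Kc [[x Kx] _]] := K_attractor.
have /andP[x0 _] := attractor_ge0_le1 Kx.
have K_px n : K (p ^+ n * x).
  elim: n => [|n IH]; first by rewrite expr0 mul1r.
  by have := attractor_image ord0 IH; rewrite /Smap /= exprS mulrA.
apply: closed_approx (compact_closed (@Rhausdorff R) Kc) _ => e e0.
have p01 : 0 <= p < 1 by case/andP: hp => -> pr; case/andP: hr => _ r1; lra.
have [N pNx] := exists_expr_mul_lt x p01 e0.
exists (p ^+ N * x) => //.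
by rewrite sub0r normrN ger0_norm // mulr_ge0 // exprn_ge0 //; case/andP: hp.
Qed.

Lemma attractor1 : K 1.
Proof.
have [Kc [[x Kx] _]] := K_attractor.
have /andP[_ x1] := attractor_ge0_le1 Kx.
have K_rx n : K (1 - r ^+ n * (1 - x)).
  elim: n => [|n IH]; first by rewrite expr0 mul1r subKr.
  have := attractor_image ord_max IH; rewrite /Smap /= exprS.
  by congr K; ring.
apply: closed_approx (compact_closed (@Rhausdorff R) Kc) _ => e e0.
have [N rNx] := exists_expr_mul_lt (1 - x) r01 e0.
exists (1 - r ^+ N * (1 - x)) => //.
by rewrite subKr ger0_norm // mulr_ge0 ?subr_ge0 // exprn_ge0 //; case/andP: r01.
Qed.

Lemma attractor_word_approx n y : K y ->
  exists t : n.-tuple 'I_6, `|y - word_point r p q t| <= r ^+ n.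
Proof.
elim: n y => [|n IH] y Ky.
  exists [tuple]; rewrite /word_point /= subr0 expr0.
  by have /andP[y0 y1] := attractor_ge0_le1 Ky; rewrite ger0_norm.
have [i [y' [Ky' ->]]] := attractor_preimage Ky.
have [t yt] := IH y' Ky'.
exists [tuple of i :: t]; rewrite /word_point /=.
apply: le_trans (Smap_lipschitz _ _ _ hp hq) _.
by rewrite exprS ler_wpM2l // ltW //; case/andP: hr.
Qed.

End Attractor.

Lemma Smap_inord2 (R : realType) (p q r x : R) : Smap p q r (inord 2) x = hh R - q * x.
Proof. by rewrite /Smap (_ : val (inord 2 : 'I_6) = 2%N) //; apply: inordK. Qed.

Lemma Smap_inord3 (R : realType) (p q r x : R) : Smap p q r (inord 3) x = hh R - r + r * x.
Proof. by rewrite /Smap (_ : val (inord 3 : 'I_6) = 3%N) //; apply: inordK. Qed.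

Section Coincidence.
Variables (R : realType) (p q r : R) (K : set R).
Hypotheses (hp : 0 < p <= r) (hq : 0 < q <= r) (hr : 0 < r < 1/36).
Hypothesis K_attractor : is_attractor p q r K.

Let hp' : 0 <= p <= r. Proof. by case/andP: hp => /ltW ->. Qed.
Let hq' : 0 <= q <= r. Proof. by case/andP: hq => /ltW ->. Qed.
Let K_ge0_le1 := attractor_ge0_le1 hp' hq' hr K_attractor.

Lemma attractor_div_p u : K u -> 0 < u < aa R -> K (u / p).
Proof.
move=> Ku /andP[u0 ua]; case/andP: hp => p0 pr; case/andP: hq => q0 qr.
case/andP: hr => r0 r1.
have [i [v [Kv uv]]] := attractor_preimage K_attractor Ku.
have /andP[v0 v1] := K_ge0_le1 Kv.
have qv : q * v <= q by apply: ler_piMr => //; apply: ltW.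
have rv : r * v <= r by apply: ler_piMr => //; apply: ltW.
have := mulr_ge0 (ltW r0) v0; move: u0 ua; rewrite {}uv.
case_Smap i => *; first by rewrite mulrAC divff ?gt_eqF // mul1r.
all: exfalso; lra.
Qed.

Lemma attractor_sub1_div_r u : K (1 - u) -> 0 < u < aa R -> K (1 - u / r).
Proof.
move=> Ku /andP[u0 ua]; case/andP: hp => p0 pr; case/andP: hq => q0 qr.
case/andP: hr => r0 r1.
have [i [v [Kv uv]]] := attractor_preimage K_attractor Ku.
have /andP[v0 v1] := K_ge0_le1 Kv.
have pv : p * v <= p by apply: ler_piMr => //; apply: ltW.
have qv : q * v <= q by apply: ler_piMr => //; apply: ltW.
have rv : r * v <= r by apply: ler_piMr => //; apply: ltW.
have := mulr_ge0 (ltW q0) v0; have := mulr_ge0 (ltW r0) v0; move: ua uv.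
case_Smap i => *; try by exfalso; lra.
all: rewrite (_ : u = (1 - v) * r) ?mulfK ?gt_eqF ?subKr //; lra.
Qed.

Lemma attractor_zoom0 y : K y -> 0 < y ->
  exists i, K (y / p ^+ i) /\ aa R <= y / p ^+ i.
Proof.
apply: exists_rescale_ge; last exact: attractor_div_p.
- by case/andP: hp => -> pr; case/andP: hr => _ r1; lra.
- by move=> u /K_ge0_le1/andP[].
Qed.

Lemma attractor_zoom1 w : K (1 - w) -> 0 < w ->
  exists j, K (1 - w / r ^+ j) /\ aa R <= w / r ^+ j.
Proof.
apply: (@exists_rescale_ge _ (fun u => K (1 - u))); last exact: attractor_sub1_div_r.
- by case/andP: hr => -> r1; lra.
- by move=> u /K_ge0_le1/andP[]; lra.
Qed.

Lemma extra_intersection_point :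
  ~ ((Smap p q r (inord 2) @` K) `&` (Smap p q r (inord 3) @` K) = [set hh R]) ->
  exists y w, [/\ K y, K (1 - w), 0 < y, 0 < w & q * y = r * w].
Proof.
move=> not_single; case/andP: hq => q0 _; case/andP: hr => r0 _.
have [x [[[y Ky Sy] [z Kz Sz]] x_neq]] :
    exists x, ((Smap p q r (inord 2) @` K) `&` (Smap p q r (inord 3) @` K)) x /\ x <> hh R.
  apply: contrapT => no_other; apply: not_single; apply/seteqP; split => [x Sx|_ ->].
    by apply: contrapT => xh; apply: no_other; exists x.
  split; [exists 0 | exists 1].
  - exact: (attractor0 hp' hq' hr K_attractor).
  - by rewrite Smap_inord2 mulr0 subr0.
  - exact: (attractor1 hp' hq' hr K_attractor).
  - by rewrite Smap_inord3 mulr1 subrK.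
move: Sy Sz; rewrite Smap_inord2 Smap_inord3 => Sy Sz.
have /andP[y0 _] := K_ge0_le1 Ky.
have y_gt0 : 0 < y.
  rewrite lt_neqAle y0 andbT; apply/eqP => y_eq0; apply: x_neq.
  by rewrite -Sy -y_eq0 mulr0 subr0.
have qyrz : q * y = r * (1 - z) by lra.
exists y, (1 - z); rewrite subKr; split => //.
by rewrite -(pmulr_rgt0 _ r0) -qyrz mulr_gt0.
Qed.

Lemma approx_coincidence_of_exact (c y w : R) : 0 <= c -> K y -> K (1 - w) ->
  aa R <= y -> aa R <= w -> c * q * y = w ->
  forall n, exists s t : n.-tuple 'I_6, approx_coincidence r c p q n s t.
Proof.
move=> c0 Ky Kw ay aw cqyw n.
have /andP[y0 y1] := K_ge0_le1 Ky.
have /andP[w1 w0] := K_ge0_le1 Kw.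
have cq0 : 0 <= c * q by case/andP: hq' => q0 _; apply: mulr_ge0.
have cq_le5 : c * q <= 5 by move: ay; rewrite /aa; nra.
have [s ys] := attractor_word_approx hp' hq' hr K_attractor n Ky.
have [t wt] := attractor_word_approx hp' hq' hr K_attractor n Kw.
exists s, t; rewrite /approx_coincidence.
set Y := word_point r p q s in ys *; set T := word_point r p q t in wt *.
have e0 : 0 <= r ^+ n by case/andP: hr => r0 _; rewrite exprn_ge0 // ltW.
have cqY : `|c * q * (Y - y)| <= 5 * r ^+ n.
  rewrite normrM (ger0_norm cq0) distrC.
  by apply: le_trans (ler_wpM2l cq0 ys) _; apply: ler_wpM2r.
have -> : c * q * Y - (1 - T) = c * q * (Y - y) - ((1 - w) - T) by rewrite -cqyw; ring.
split; last split.
- by move: ys; rewrite ler_norml => /andP[]; lra.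
- by move: wt; rewrite ler_norml => /andP[]; lra.
- by apply: le_trans (ler_normB _ _) _; lra.
Qed.

Lemma attractor_coincidence :
  ~ ((Smap p q r (inord 2) @` K) `&` (Smap p q r (inord 3) @` K) = [set hh R]) ->
  exists i j, forall n, exists s t : n.-tuple 'I_6,
    approx_coincidence r (p ^+ i / r ^+ j.+1) p q n s t.
Proof.
move=> /extra_intersection_point[y [w [Ky Kw y0 w0 qyrw]]].
have [i [Ki ai]] := attractor_zoom0 Ky y0.
have [j [Kj aj]] := attractor_zoom1 Kw w0.
case/andP: hp => p0 _; case/andP: hr => r0 _.
exists i, j; apply: (approx_coincidence_of_exact _ Ki Kj ai aj).
  by rewrite divr_ge0 // exprn_ge0 // ltW.
have -> : w = q * y / r by rewrite qyrw mulrAC divff ?gt_eqF // mul1r.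
by rewrite exprS; field; rewrite !expf_neq0 ?gt_eqF.
Qed.
End Coincidence.

Section Transversality.
Variables (R : realType) (r : R).
Hypothesis hr : 0 < r < 1/36.

Lemma approx_coincidence_slope (c p q : R) n s t : 0 <= c -> 0 < q < r ->
  (2 <= n)%N -> approx_coincidence r c p q n s t ->
  3 <= c * (word_point r p q s - 2 * q).
Proof.
move=> c0 /andP[q0 qr] n2 [Ys [Yt cqY]]; case/andP: hr => r0 r1.
move: Ys Yt cqY; rewrite /aa.
set Y := word_point r p q s; set T := word_point r p q t; set e := r ^+ n.
have e_small : e < 1/1296.
  apply: le_lt_trans (_ : r ^+ 2 < _); last by rewrite expr2; nra.
  rewrite /e -(subnKC n2) exprD; apply: ler_piMr; first by rewrite exprn_ge0 // ltW.
  by rewrite exprn_ile1 ?ltW //; lra.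
have e0 : 0 <= e by rewrite exprn_ge0 // ltW.
move=> Ys Yt /ler_normlP[cqY_ge _].
have cqY_ge' : 3/15 - 7 * e <= c * q * Y by lra.
have Y_2q : 0 <= Y - 2 * q by lra.
(* q Y (c (Y - 2 q) - 3) = c q Y (Y - 2 q) - 3 q Y, and q < 1/36 while c q Y, Y >= a - O(e). *)
have slope_q : 0 <= q * Y * (c * (Y - 2 * q) - 3).
  have st1 : (3/15 - 7 * e) * (Y - 2 * q) <= c * q * Y * (Y - 2 * q) by apply: ler_wpM2r.
  have st2 : (3/15 - e) * (3/15 - 7 * e - 3 * q) <= Y * (3/15 - 7 * e - 3 * q).
    by apply: ler_wpM2r => //; lra.
  nra.
by move: slope_q; rewrite pmulr_rge0 ?subr_ge0 // mulr_gt0 //; lra.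
Qed.

Lemma approx_coincidence_q_close (c p q1 q2 : R) n s t : 0 <= c -> 0 <= p <= r ->
  0 < q1 < r -> 0 < q2 < r -> (2 <= n)%N ->
  approx_coincidence r c p q1 n s t -> approx_coincidence r c p q2 n s t ->
  `|q2 - q1| <= 12 * r ^+ n.
Proof.
move=> c0 hp hq1 hq2 n2.
wlog q12 : q1 q2 hq1 hq2 / q1 <= q2.
  move=> wlog_q A1 A2; have [q12|/ltW q21] := leP q1 q2; first exact: wlog_q.
  by rewrite distrC; apply: wlog_q.
move=> A1 A2; have slope := approx_coincidence_slope c0 hq2 n2 A2.
move: A1 A2 => [_ [_ g1]] [_ [_ g2]].
case/andP: hq1 => q10 q1r; case/andP: hq2 => q20 q2r.
have [hq1' hq2'] : 0 <= q1 <= r /\ 0 <= q2 <= r by rewrite !ltW.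
have := word_point_lipschitz_q hr s hp hq1' hq2'.
have := word_point_lipschitz_q hr t hp hq1' hq2'.
set Y1 := word_point r p q1 s in g1 *; set Y2 := word_point r p q2 s in g2 slope *.
set T1 := word_point r p q1 t in g1 *; set T2 := word_point r p q2 t in g2 *.
set d := q2 - q1; have d0 : 0 <= d by rewrite subr_ge0.
rewrite (ger0_norm d0) !ler_norml => /andP[T21 T12] /andP[Y21 Y12].
move: g1 g2; rewrite !ler_norml => /andP[g1 _] /andP[_ g2].
have gain : d <= c * q2 * Y2 - (1 - T2) - (c * q1 * Y1 - (1 - T1)).
  have -> : c * q2 * Y2 - (1 - T2) - (c * q1 * Y1 - (1 - T1)) =
      d * (c * (Y2 - 2 * q2)) + c * q1 * (Y2 - Y1 + 2 * d) + 2 * c * d * (q2 - q1) - (T1 - T2).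
    by rewrite /d; ring.
  have : 0 <= c * q1 * (Y2 - Y1 + 2 * d).
    by rewrite mulr_ge0 ?mulr_ge0 ?(ltW q10) //; lra.
  have : 0 <= 2 * c * d * (q2 - q1) by rewrite !mulr_ge0.
  have : 3 * d <= d * (c * (Y2 - 2 * q2)) by rewrite [3 * d]mulrC; apply: ler_wpM2l.
  lra.
lra.
Qed.

End Transversality.

Section Measurability.
Context d (T : measurableType d) (R : realType).

Lemma measurable_ler (f g : T -> R) : measurable_fun setT f -> measurable_fun setT g ->
  measurable [set z | f z <= g z].
Proof.
move=> mf mg; have := measurable_fun_ler mf mg measurableT (Y := [set true]) I.
by rewrite setTI; congr measurable; apply/seteqP; split => z /= /eqP.
Qed.

Lemma measurable_ltr (f g : T -> R) : measurable_fun setT f -> measurable_fun setT g ->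
  measurable [set z | f z < g z].
Proof.
move=> mf mg; have := measurable_fun_ltr mf mg measurableT (Y := [set true]) I.
by rewrite setTI; congr measurable; apply/seteqP; split => z /= /eqP.
Qed.

End Measurability.

Ltac measurable_poly :=
  repeat first [ apply: measurable_funD | apply: measurable_funB | apply: measurable_funM
               | apply: measurable_funN | apply: measurable_funX
               | apply: measurableT_comp; [exact: normr_measurable|]
               | exact: measurable_fst | exact: measurable_snd | exact: measurable_cst ].

Lemma measurable_word_point (R : realType) (r : R) s :
  measurable_fun setT (fun z : R * R => word_point r z.1 z.2 s).
Proof.
elim: s => [|i s IH] /=; first exact: measurable_cst.
by case_Smap i; measurable_poly; exact: IH.
Qed.

Lemma measure_bigsetU_seq_le d (T : measurableType d) (R : realType)
    (mu : {measure set T -> \bar R}) (I : Type) (F : I -> set T) (s : seq I) (c : R) :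
  (forall i, measurable (F i)) -> (forall i, (mu (F i) <= c%:E)%E) ->
  (mu (\big[setU/set0]_(i <- s) F i) <= ((size s)%:R * c)%:E)%E.
Proof.
move=> mF muF; elim: s => [|i s IH]; first by rewrite big_nil measure0 mul0r.
rewrite big_cons /= -addn1 natrD mulrDl mul1r EFinD addeC.
apply: le_trans (measureU2 mu (mF i) (bigsetU_measurable _ _)) _ => [k _|].
  exact: mF.
exact: leeD (muF i) IH.
Qed.

Lemma lebesgue_measure_le_diam (R : realType) (A : set R) (e : R) :
  measurable A -> 0 <= e -> (forall x y, A x -> A y -> `|x - y| <= e) ->
  (lebesgue_measure A <= (2 * e)%:E)%E.
Proof.
move=> mA e0 diamA.
have [->|/set0P[x Ax]] := eqVneq A set0; first by rewrite measure0 lee_fin mulr_ge0.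
have A_sub : A `<=` `[x - e, x + e]%classic.
  move=> y Ay; have := diamA _ _ Ax Ay.
  by rewrite /= in_itv /= distrC ler_distl => /andP[-> ->].
apply: (@le_trans _ _ (lebesgue_measure `[x - e, x + e]%classic)).
  by apply: le_measure => //; rewrite inE //; apply: measurable_itv.
rewrite lebesgue_measure_itv /= lte_fin; case: ifP => _; last by rewrite lee_fin mulr_ge0.
by rewrite -EFinB lee_fin; lra.
Qed.

Section ExceptionalSet.
Variables (R : realType) (r : R).

Definition coincidence_set (i j n : nat) (s t : seq 'I_6) : set (R * R) :=
  [set z | 0 < z.1 /\ z.1 < r /\ 0 < z.2 /\ z.2 < r /\
           approx_coincidence r (z.1 ^+ i / r ^+ j.+1) z.1 z.2 n s t].

Definition exceptional_set (i j : nat) : set (R * R) :=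
  \bigcap_(n in [set: nat])
    \big[setU/set0]_(st <- enum {: n.-tuple 'I_6 * n.-tuple 'I_6})
      coincidence_set i j n st.1 st.2.

Lemma measurable_coincidence_set i j n s t : measurable (coincidence_set i j n s t).
Proof.
rewrite /coincidence_set /approx_coincidence.
repeat apply: measurableI; first [apply: measurable_ltr | apply: measurable_ler];
  measurable_poly; exact: measurable_word_point.
Qed.

Lemma measurable_exceptional_set i j : measurable (exceptional_set i j).
Proof.
apply: bigcapT_measurable => n; apply: bigsetU_measurable => st _.
exact: measurable_coincidence_set.
Qed.

Hypothesis hr : 0 < r < 1/36.

Lemma not_unique_one_point_exceptional p q : 0 < p < r -> 0 < q < r ->
  ~ unique_one_point p q r -> exists i j, exceptional_set i j (p, q).
Proof.
move=> /andP[p0 pr] /andP[q0 qr] /existsNP[K /not_implyP[K_attractor not_single]].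
have [||i [j coinc]] := attractor_coincidence _ _ hr K_attractor not_single.
- by rewrite p0 ltW.
- by rewrite q0 ltW.
exists i, j => n _; have [s [t st]] := coinc n.
by rewrite -bigcup_seq; exists (s, t); first by rewrite /= mem_enum.
Qed.

Lemma coincidence_section_le i j n s t p : (2 <= n)%N ->
  (lebesgue_measure (xsection (coincidence_set i j n s t) p) <= (24 * r ^+ n)%:E)%E.
Proof.
move=> n2; have e0 : 0 <= 12 * r ^+ n by case/andP: hr => r0 _; rewrite mulr_ge0 ?exprn_ge0 ?ltW.
rewrite (_ : 24 * r ^+ n = 2 * (12 * r ^+ n)); last by ring.
apply: lebesgue_measure_le_diam => //.
  by apply: measurable_xsection; exact: measurable_coincidence_set.
move=> q1 q2; rewrite /xsection /= !inE.
move=> [p0 [pr [q10 [q1r A1]]]] [_ [_ [q20 [q2r A2]]]].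
rewrite distrC; apply: approx_coincidence_q_close A1 A2; rewrite ?q10 ?q20 //.
- by rewrite divr_ge0 ?exprn_ge0 // ?ltW //; case/andP: hr.
- by rewrite !ltW.
Qed.

Lemma exceptional_section_le i j n p : (2 <= n)%N ->
  (lebesgue_measure (xsection (exceptional_set i j) p) <= (24 * (36 * r) ^+ n)%:E)%E.
Proof.
move=> n2; set pairs := enum {: n.-tuple 'I_6 * n.-tuple 'I_6}.
have sub : xsection (exceptional_set i j) p `<=`
    \big[setU/set0]_(st <- pairs) xsection (coincidence_set i j n st.1 st.2) p.
  move=> q; rewrite /xsection /= inE => /(_ n I); rewrite -!bigcup_seq => -[st st_in Cst].
  by exists st => //; rewrite /= inE.
apply: le_trans (@le_measure _ _ _ lebesgue_measure _ _ _ _ sub) _.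
- by rewrite inE; apply: measurable_xsection; exact: measurable_exceptional_set.
- rewrite inE; apply: bigsetU_measurable => st _.
  by apply: measurable_xsection; exact: measurable_coincidence_set.
apply: le_trans (measure_bigsetU_seq_le pairs _
  (fun st => coincidence_section_le i j st.1 st.2 p n2)) _.
  by move=> st; apply: measurable_xsection; exact: measurable_coincidence_set.
rewrite /pairs -cardE card_prod card_tuple card_ord lee_fin natrM natrX exprMn.
suff -> : 6 ^+ n * 6 ^+ n * (24 * r ^+ n) = 24 * (36 ^+ n * r ^+ n) :> R by [].
rewrite -exprMn.
have -> : 6 * 6 = 36 :> R by rewrite -natrM.
by rewrite mulrCA.
Qed.

Lemma exceptional_section_null i j p :
  lebesgue_measure (xsection (exceptional_set i j) p) = 0%E.
Proof.
apply/eqP; rewrite eq_le measure_ge0 andbT; apply/lee_addgt0Pr => e e0; rewrite add0e.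
have r36 : 0 <= 36 * r < 1 by case/andP: hr => r0 r1; apply/andP; split; lra.
have [N rN] := exists_expr_mul_lt 24 r36 e0.
apply: le_trans (exceptional_section_le i j p (isT : (2 <= N.+2)%N)) _.
have /andP[r36_ge0 /ltW r36_le1] := r36.
have := ler_wiXn2l r36_ge0 r36_le1 (leqW (leqnSn N)).
by rewrite lee_fin; lra.
Qed.

Lemma exceptional_set_null i j :
  ((lebesgue_measure \x lebesgue_measure)%E (exceptional_set i j) = 0)%E.
Proof.
rewrite /product_measure1 (_ : lebesgue_measure \o _ = cst 0%E); first exact: integral0.
by apply: funext => p; rewrite /= exceptional_section_null.
Qed.

End ExceptionalSet.

Theorem theorem4 (R : realType) (r : R) :
  0 < r < 1 / 36 ->
  ((lebesgue_measure \x lebesgue_measure)%E).-negligible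
     ([set pq : R * R | (pq.1 \in `]0, r[) /\ (pq.2 \in `]0, r[)]
      `\` [set pq : R * R | unique_one_point pq.1 pq.2 r])
  /\
  (forall p : R, 0 < p < r ->
     (@lebesgue_measure R).-negligible
       (`]0, r[%classic `\` [set q : R | unique_one_point p q r])).
Proof.
move=> hr; split.
  apply: (@negligibleS _ _ _ (lebesgue_measure \x lebesgue_measure)%E
    (\bigcup_i \bigcup_j exceptional_set r i j)).
    move=> [p q] /= [[]]; rewrite !in_itv /= => hp hq.
    by case/(not_unique_one_point_exceptional hr hp hq) => i [j Eij]; exists i => //; exists j.
  apply: negligible_bigcup => i; apply: negligible_bigcup => j.
  exists (exceptional_set r i j); split => //; first exact: measurable_exceptional_set.
  exact: exceptional_set_null.
move=> p hp.
apply: (@negligibleS _ _ _ lebesgue_measure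
  (\bigcup_i \bigcup_j xsection (exceptional_set r i j) p)).
  move=> q /= []; rewrite in_itv /= => hq.
  case/(not_unique_one_point_exceptional hr hp hq) => i [j Eij].
  by exists i => //; exists j => //; rewrite /xsection /= inE.
apply: negligible_bigcup => i; apply: negligible_bigcup => j.
exists (xsection (exceptional_set r i j) p); split => //.
  by apply: measurable_xsection; exact: measurable_exceptional_set.
exact: exceptional_section_null.
Qed.
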